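(* If a polynomial dynamical system $\frac{d\mathbf{x}}{dt}=f(\mathbf{x})$ on $\mathbb{R}^d_{\ge 0}$ is weakly reversible, then it is generated by a weakly reversible reaction network whose set of source nodes is the set of exponent vectors of the monomials of $f$.
   Context: A reaction network (E-graph) $\mathcal{G}=(\mathcal{V},\mathcal{E})$ is a finite directed graph whose nodes are distinct elements of a finite set $Y\subset\mathbb{R}^d_{\ge 0}$, with $\mathcal{V}\neq\emptyset$, every node incident to at least one edge, and no edge from a node to itself. For an edge $e$, $\mathbf{s}(e)$ is its source node, $\mathbf{t}(e)$ its target, $\mathbf{v}(e)=\mathbf{t}(e)-\mathbf{s}(e)$. Given positive rate constants $(k_e)$, $\mathcal{G}$ generates the system $\frac{d\mathbf{x}}{dt}=\sum_{e}k_e\mathbf{x}^{\mathbf{s}(e)}\mathbf{v}(e)$ ($\mathbf{x}^{\mathbf{y}}=\prod_i x_i^{y_i}$, $0^0=1$). $\mathcal{G}$ is weakly reversible if every edge lies in a directed cycle. A polynomial dynamical system is weakly reversible if it is generated, for some positive rate constants, by some weakly reversible network. The monomials of $f$ are those $\mathbf{x}^{\mathbf{y}}$ appearing in $f$ with nonzero (vector) coefficient. *)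

From HB Require Import structures.
From mathcomp Require Import all_boot all_order all_algebra.
From mathcomp Require Import finmap.
From mathcomp Require Import reals exp.
Set Implicit Arguments. Unset Strict Implicit. Unset Printing Implicit Defensive.
Import Order.TTheory GRing.Theory Num.Theory.
Local Open Scope ring_scope.
Local Open Scope fset_scope.

Section Defs.
Variables (R : realType) (d : nat).

Notation vec := 'rV[R]_d.

Definition nonneg_vec (x : vec) : bool := [forall i, 0 <= x 0 i].

(* generalized monomial x^y = prod_i x_i^{y_i}, with 0^0 = 1 (powR) *)
Definition monom (x y : vec) : R := \prod_(i < d) powR (x 0 i) (y 0 i).

Record network := Network { nodes : {fset vec} ; edges : {fset vec * vec} }.

Definition src (e : vec * vec) : vec := e.1.
Definition tgt (e : vec * vec) : vec := e.2.

Definition is_network (G : network) : Prop :=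
  [/\ nodes G != fset0,
      (forall y, y \in nodes G -> nonneg_vec y),
      (forall e, e \in edges G -> src e \in nodes G /\ tgt e \in nodes G),
      (forall e, e \in edges G -> src e != tgt e) &
      (forall y, y \in nodes G ->
         exists2 e, e \in edges G & (src e == y) || (tgt e == y))].

Definition reaches (G : network) (a b : vec) : Prop :=
  exists p : seq vec,
    path (fun u v => (u, v) \in edges G) a p /\ last a p = b.

Definition weakly_reversible (G : network) : Prop :=
  forall e, e \in edges G -> reaches G (tgt e) (src e).

Definition generated_field (G : network) (k : vec * vec -> R) (x : vec) : vec :=
  \sum_(e <- edges G) (k e * monom x (src e)) *: (tgt e - src e).

Definition generates (G : network) (k : vec * vec -> R) (f : vec -> vec) : Prop :=
  (forall e, e \in edges G -> 0 < k e) /\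
  (forall x, nonneg_vec x -> generated_field G k x = f x).

Definition poly_field (S : {fset vec}) (c : vec -> vec) (x : vec) : vec :=
  \sum_(y <- S) monom x y *: c y.

Definition monomial_exponents (S : {fset vec}) (c : vec -> vec) : {fset vec} :=
  [fset y in S | c y != 0].

Definition source_nodes (G : network) : {fset vec} := [fset src e | e in edges G].

Definition weakly_reversible_system (f : vec -> vec) : Prop :=
  exists G k, [/\ is_network G, weakly_reversible G & generates G k f].

End Defs.

(* Write the generated field as the sum over nodes a of x^a times the net
   vector sum_b k(a, b) (b - a).  If the net vector at a node y vanishes, delete
   y and reroute each flow a -> y along the edges y -> b in proportion to their
   rates: the other net vectors do not change, and weak reversibility survives
   because paths through y can be shortcut.  Once every balanced node is removed,
   the sources are exactly the nodes with nonzero net vector, and by the linear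
   independence of the monomials x^y on the nonnegative orthant these are the
   exponents of the monomials of f. *)

From HB Require Import structures.
From mathcomp Require Import all_boot all_order all_algebra.
From mathcomp Require Import finmap.
From mathcomp Require Import reals exp.
From mathcomp Require Import ring lra.
Set Implicit Arguments. Unset Strict Implicit. Unset Printing Implicit Defensive.
Import Order.TTheory GRing.Theory Num.Theory.
Local Open Scope ring_scope.

Lemma exists_rV_neq (R : eqType) (n : nat) (u v : 'rV[R]_n) :
  u != v -> exists i, u 0 i != v 0 i.
Proof.
move=> uv; apply/existsP; apply: contraNT uv => /existsPn uv.
by apply/eqP/rowP => i; apply/eqP; rewrite -[_ == _]negbK uv.
Qed.

Lemma big_fsetM (R : Type) (idx : R) (op : Monoid.com_law idx) (I J : choiceType)
    (A : {fset I}) (B : {fset J}) (F : I * J -> R) :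
  \big[op/idx]_(e <- (A `*` B)%fset) F e =
  \big[op/idx]_(a <- A) \big[op/idx]_(b <- B) F (a, b).
Proof.
rewrite pair_big_dep_cond; apply: eq_fbig => [[a b]|[] //].
rewrite in_fsetM /=; apply/idP/imfset2P => [/andP[aA bB]|[a' + [b' + [-> ->]]]].
  by exists a; rewrite ?inE ?andbT //; exists b; rewrite ?inE ?andbT.
by rewrite !inE !andbT => -> ->.
Qed.

Section MonomialIndependence.
Context {R : realType} {d : nat}.
Notation vec := 'rV[R]_d.

Definition dilate (i : 'I_d) (x : vec) : vec :=
  \row_j (if j == i then 2 * x 0 j else x 0 j).

Lemma dilate_nonneg i x : nonneg_vec x -> nonneg_vec (dilate i x).
Proof.
move=> /forallP x0; apply/forallP => j; rewrite mxE.
by case: ifP => _; rewrite ?mulr_ge0.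
Qed.

Lemma monom_dilate i x y : nonneg_vec x ->
  monom (dilate i x) y = powR 2 (y 0 i) * monom x y.
Proof.
move=> /forallP x0; rewrite /monom (bigD1 i) //= [in RHS](bigD1 i) //= mulrA.
rewrite mxE eqxx powRM //; congr (_ * _); apply: eq_bigr => j /negPf ji.
by rewrite mxE ji.
Qed.

Lemma monom_cst1 y : monom (const_mx 1 : vec) y = 1.
Proof. by rewrite /monom big1 // => j _; rewrite mxE powR1. Qed.

Lemma powR2_inj : injective (@powR R 2).
Proof.
move=> a b /(congr1 (@ln R)); rewrite !ln_powR => /mulIf; apply.
by rewrite gt_eqF // ln_gt0 // ltr1n.
Qed.

Definition vanishing (s : seq vec) (g : vec -> vec) : Prop :=
  forall x, nonneg_vec x -> \sum_(y <- s) monom x y *: g y = 0.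

Lemma vanishing_weight i lam s g : vanishing s g ->
  vanishing s (fun y => (powR 2 (y 0 i) - lam) *: g y).
Proof.
move=> g0 x x0; under eq_bigr do rewrite scalerBl scalerBr !scalerA.
rewrite sumrB; under eq_bigr do rewrite mulrC -monom_dilate //.
rewrite g0 ?dilate_nonneg //; under eq_bigr do rewrite mulrC -scalerA.
by rewrite -scaler_sumr g0 // scaler0 subrr.
Qed.

Lemma vanishing_filter (P : pred vec) s g : vanishing s g ->
  {in s, forall y, ~~ P y -> g y = 0} -> vanishing (filter P s) g.
Proof.
move=> g0 gP x x0; rewrite big_filter big_rmcond_in ?g0 // => y ys /gP -> //.
by rewrite scaler0.
Qed.

Lemma size_filter_lt (T : eqType) (P : pred T) (s : seq T) x :
  x \in s -> ~~ P x -> (size (filter P s) < size s)%N.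
Proof.
move=> xs Px; rewrite size_filter -(count_predC P s) -ltn_subLR ?subnn //.
by rewrite -has_count; apply/hasP; exists x.
Qed.

(* Dilating the i-th coordinate multiplies the coefficient of x^y by 2^(y_i),
   which separates the exponents according to their i-th entry. *)
Lemma monom_lin_indep s g : uniq s -> vanishing s g -> {in s, forall y, g y = 0}.
Proof.
have [n] := ubnP (size s); elim: n => // n IH in s g *; rewrite ltnS => sn us g0 y ys.
have [/allP sy|] := boolP (all (pred1 y) s).
  have := g0 (const_mx 1); rewrite (bigD1_seq y) //= monom_cst1 scale1r.
  rewrite big1_seq ?addr0; first by apply; apply/forallP => i; rewrite mxE.
  by move=> z /andP[zy /sy /eqP zy']; rewrite zy' eqxx in zy.
case/allPn => y1 y1s /= y1y; have [i yi] := exists_rV_neq y1y.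
pose a := y 0 i.
have g_off : {in s, forall z : vec, z 0 i != a -> g z = 0}.
  move=> z zs za; have zy : z != y by apply: contraNneq za => ->.
  pose gw (z : vec) := (powR 2 (z 0 i) - powR 2 a) *: g z.
  have : gw z = 0.
    apply: (IH (filter (predC1 y) s)); rewrite ?filter_uniq ?mem_filter /= ?zy //.
      by apply: leq_trans _ sn; apply: (size_filter_lt ys); rewrite /= eqxx.
    apply: vanishing_filter (vanishing_weight i (powR 2 a) g0) _.
    by move=> _ _ /negbNE /eqP ->; rewrite subrr scale0r.
  move/eqP; rewrite scaler_eq0 subr_eq0 => /orP[/eqP/powR2_inj za'|/eqP //].
  by rewrite za' eqxx in za.
apply: (IH (filter (fun z : vec => z 0 i == a) s)); rewrite ?filter_uniq ?mem_filter ?eqxx //.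
  exact: leq_trans (size_filter_lt y1s yi) sn.
by apply: vanishing_filter g0 _ => z zs /g_off ->.
Qed.

Lemma poly_field_exponents (S1 S2 : {fset vec}) c1 c2 :
    (forall x, nonneg_vec x -> poly_field S1 c1 x = poly_field S2 c2 x) ->
  monomial_exponents S1 c1 = monomial_exponents S2 c2.
Proof.
move=> eq12; set U := (S1 `|` S2)%fset.
pose ext (S : {fset vec}) (c : vec -> vec) (y : vec) := if y \in S then c y else 0.
have ext_sum S c x : (S `<=` U)%fset ->
    poly_field S c x = \sum_(y <- U) monom x y *: ext S c y.
  move=> SU; rewrite /poly_field (eq_big_seq (fun y => monom x y *: ext S c y)).
    by apply: big_fset_incl SU _ => y _ /negPf yS; rewrite /ext yS scaler0.
  by move=> y yS; rewrite /ext yS.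
have ext_eq : {in U, forall y, ext S1 c1 y - ext S2 c2 y = 0}.
  apply: monom_lin_indep (fset_uniq U) _ => x x0.
  under eq_bigr do rewrite scalerBr.
  by rewrite sumrB -!ext_sum ?fsubsetUl ?fsubsetUr // eq12 ?subrr.
have ext_neq0 S c y : ((y \in S) && (c y != 0)) = (ext S c y != 0).
  by rewrite /ext; case: (y \in S); rewrite ?eqxx.
apply/fsetP => y; rewrite !inE !ext_neq0.
have [yU|] := boolP (y \in U); first by move/eqP: (ext_eq y yU); rewrite subr_eq0 => /eqP ->.
by rewrite /ext !inE negb_or => /andP[/negPf -> /negPf ->].
Qed.

End MonomialIndependence.

Section Rates.
Context {R : realType} {d : nat}.
Notation vec := 'rV[R]_d.
Implicit Types (V : {fset vec}) (w : vec -> vec) (kap : vec * vec -> R).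

Definition net_vector V kap (a : vec) : vec := \sum_(b <- V) kap (a, b) *: (b - a).

Inductive reachable kap : vec -> vec -> Prop :=
  | reachable_refl a : reachable kap a a
  | reachable_step a m b : 0 < kap (a, m) -> reachable kap m b -> reachable kap a b.

Lemma reachable_trans kap a b c :
  reachable kap a b -> reachable kap b c -> reachable kap a c.
Proof. by elim=> // u m v um _ IH /IH; apply: reachable_step. Qed.

Lemma reachable_out kap a b : reachable kap a b -> a != b -> exists m, 0 < kap (a, m).
Proof. by case=> [u|u m v um _]; [rewrite eqxx | exists m]. Qed.

Record wr_realization V w kap : Prop := WrRealization {
  rate_ge0 : forall e, 0 <= kap e;
  rate_diag : forall a, kap (a, a) = 0;
  rate_support : forall a b, 0 < kap (a, b) -> a \in V /\ b \in V;
  rate_reversible : forall a b, 0 < kap (a, b) -> reachable kap b a;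
  rate_net_vector : {in V, net_vector V kap =1 w} }.

Lemma rate_pos_neq V w kap a b : wr_realization V w kap -> 0 < kap (a, b) -> a != b.
Proof. by move=> kapR; apply: contraTneq => ->; rewrite (rate_diag kapR) ltxx. Qed.

Lemma net_vector_neq0_out V kap a : (forall e, 0 <= kap e) ->
  net_vector V kap a != 0 -> exists b, 0 < kap (a, b).
Proof.
move=> kap0; have [/hasP[b _ ab] _|/hasPn no] := boolP (has (fun b => 0 < kap (a, b)) V).
  by exists b.
rewrite /net_vector big1_seq ?eqxx // => b /andP[_ /no ab].
suff -> : kap (a, b) = 0 by rewrite scale0r.
by apply/eqP; rewrite eq_le kap0 andbT leNgt.
Qed.

Definition out_rate V kap (y : vec) : R := \sum_(b <- V) kap (y, b).

Definition isolated kap (y : vec) : Prop := forall b, kap (y, b) = 0 /\ kap (b, y) = 0.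

Section Bypass.
Variables (V : {fset vec}) (w : vec -> vec) (kap : vec * vec -> R) (y : vec).
Hypothesis kapR : wr_realization V w kap.

Definition bypass (e : vec * vec) : R :=
  if (e.1 == y) || (e.2 == y) || (e.1 == e.2) then 0
  else kap e + kap (e.1, y) * kap (y, e.2) / out_rate V kap y.

Lemma rate_le_out_rate b : b \in V -> kap (y, b) <= out_rate V kap y.
Proof.
move=> bV; rewrite /out_rate (bigD1_seq b) ?fset_uniq //= lerDl.
by apply: sumr_ge0 => i _; apply: rate_ge0 kapR _.
Qed.

Lemma bypass_ge0 e : 0 <= bypass e.
Proof.
rewrite /bypass; case: ifP => // _.
by rewrite addr_ge0 ?divr_ge0 ?mulr_ge0 ?sumr_ge0 // => *; apply: rate_ge0 kapR _.
Qed.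

Lemma bypass_pos a b : a != y -> b != y -> a != b -> 0 < kap (a, b) -> 0 < bypass (a, b).
Proof.
move=> ay b_y ab ab0; rewrite /bypass /= (negPf ay) (negPf b_y) (negPf ab) /=.
by rewrite ltr_wpDr ?divr_ge0 ?mulr_ge0 ?sumr_ge0 // => *; apply: rate_ge0 kapR _.
Qed.

Lemma bypass_pos_via a b : a != y -> b != y -> a != b ->
  0 < kap (a, y) -> 0 < kap (y, b) -> 0 < bypass (a, b).
Proof.
move=> ay b_y ab ay0 yb0; rewrite /bypass /= (negPf ay) (negPf b_y) (negPf ab) /=.
rewrite ltr_wpDl ?divr_gt0 ?mulr_gt0 //; first exact: rate_ge0 kapR _.
exact: lt_le_trans yb0 (rate_le_out_rate (rate_support kapR yb0).2).
Qed.

Lemma bypass_posP a b : 0 < bypass (a, b) ->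
  [/\ a != y, b != y & 0 < kap (a, b) \/ 0 < kap (a, y) /\ 0 < kap (y, b)].
Proof.
rewrite /bypass /=; case: ifP => [_|]; first by rewrite ltxx.
move=> /negbT; rewrite !negb_or => /andP[/andP[ay b_y] _] ab0; split => //.
have := rate_ge0 kapR (a, y); rewrite le_eqVlt => /orP[/eqP ay0|ay0].
  by left; move: ab0; rewrite -ay0 !mul0r addr0.
have := rate_ge0 kapR (y, b); rewrite le_eqVlt => /orP[/eqP yb0|yb0]; last by right.
by left; move: ab0; rewrite -yb0 mulr0 mul0r addr0.
Qed.

Lemma reachable_bypass m v : reachable kap m v -> v != y ->
  forall u, u != y -> u = m \/ 0 < kap (u, m) -> reachable bypass u v.
Proof.
elim=> [a|a m' b am' _ IH] vy u uy.
  case=> ua; first by subst u; exact: reachable_refl.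
  have [<-|uv] := eqVneq u a; first exact: reachable_refl.
  by apply: reachable_step (reachable_refl _ _); apply: bypass_pos.
case=> ua; first by subst u; exact: IH vy _ uy (or_intror am').
have [ay|ay] := eqVneq a y; last first.
  apply: reachable_step (IH vy _ ay (or_intror am')).
  exact: bypass_pos uy ay (rate_pos_neq kapR ua) ua.
rewrite ay in ua am'; have m'y : m' != y by rewrite eq_sym (rate_pos_neq kapR am').
have [->|um'] := eqVneq u m'; first exact: IH vy _ m'y (or_introl erefl).
exact: reachable_step (bypass_pos_via uy m'y um' ua am') (IH vy _ m'y (or_introl erefl)).
Qed.

Lemma bypass_isolated_self : isolated bypass y.
Proof. by move=> b; rewrite /bypass /= eqxx !orbT. Qed.

Lemma bypass_isolated z : isolated kap z -> isolated bypass z.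
Proof.
move=> z0 b; have [[zb bz] [zy yz]] := (z0 b, z0 y).
by rewrite /bypass /=; split; case: ifP; rewrite // ?zb ?bz ?zy ?yz !(mul0r, mulr0, addr0).
Qed.

Lemma out_rate_eq0_inflow a : out_rate V kap y = 0 -> kap (a, y) = 0.
Proof.
move=> y0; apply/eqP; rewrite eq_le (rate_ge0 kapR) andbT leNgt; apply/negP => ay.
have ya : y != a by rewrite eq_sym (rate_pos_neq kapR ay).
have [m ym] := reachable_out (rate_reversible kapR ay) ya.
by have := lt_le_trans ym (rate_le_out_rate (rate_support kapR ym).2); rewrite y0 ltxx.
Qed.

Hypotheses (yV : y \in V) (wy0 : w y = 0).

(* As y is balanced, the outflow of y rerouted from a contributes exactly the
   lost term kap (a, y) *: (y - a). *)
Lemma bypass_net_vector a : a != y -> net_vector V bypass a = net_vector V kap a.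
Proof.
move=> ay; set c := kap (a, y) / out_rate V kap y.
have cK : c * out_rate V kap y = kap (a, y).
  have [y0|y0] := eqVneq (out_rate V kap y) 0; last by rewrite mulfVK.
  by rewrite y0 mulr0 out_rate_eq0_inflow.
have through_y : \sum_(b <- V) (kap (a, b) + c * kap (y, b)) *: (b - a) =
    net_vector V kap a + kap (a, y) *: (y - a).
  under eq_bigr do rewrite scalerDl -scalerA.
  rewrite big_split /= -scaler_sumr; congr (_ + _); rewrite -cK -scalerA; congr (_ *: _).
  rewrite /out_rate scaler_suml; apply/eqP; rewrite -subr_eq0 -sumrB; apply/eqP.
  transitivity (net_vector V kap y); last by rewrite (rate_net_vector kapR yV).
  by apply: eq_bigr => b _; rewrite -scalerBr opprB addrA subrK.
move: through_y; rewrite (bigD1_seq y) ?fset_uniq //= (rate_diag kapR) mulr0 addr0.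
rewrite addrC => /addIr <-; rewrite /net_vector (bigD1_seq y) ?fset_uniq //=.
rewrite {1}/bypass /= eqxx orbT scale0r add0r; apply: eq_bigr => b b_y.
rewrite /bypass /= (negPf ay) (negPf b_y) /=.
by case: eqVneq => [<-|_]; rewrite ?subrr ?scaler0 // /c mulrAC.
Qed.

Lemma bypass_realization : wr_realization V w bypass.
Proof.
split.
- exact: bypass_ge0.
- by move=> a; rewrite /bypass eqxx !orbT.
- move=> a b /bypass_posP[_ _ [/(rate_support kapR) //|[ay yb]]].
  by have [[aV _] [_ bV]] := (rate_support kapR ay, rate_support kapR yb).
- move=> a b /bypass_posP[ay b_y ab].
  have ba : reachable kap b a.
    case: ab => [/(rate_reversible kapR) //|[ay0 yb0]].
    exact: reachable_trans (rate_reversible kapR yb0) (rate_reversible kapR ay0).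
  exact: reachable_bypass ba ay _ b_y (or_introl erefl).
- move=> a aV; have [->|ay] := eqVneq a y; last first.
    by rewrite bypass_net_vector // (rate_net_vector kapR).
  by rewrite wy0 /net_vector big1 // => b _; rewrite (bypass_isolated_self b).1 scale0r.
Qed.

End Bypass.

Lemma exists_isolating_realization V w kap0 : wr_realization V w kap0 ->
  exists2 kap, wr_realization V w kap & {in V, forall z, w z = 0 -> isolated kap z}.
Proof.
move=> kap0R; set L := [seq z <- V | w z == 0].
suff [kap kapR isoL] : exists2 kap, wr_realization V w kap & {in L, forall z, isolated kap z}.
  by exists kap => // z zV wz; apply: isoL; rewrite mem_filter wz eqxx.
have : all (fun z => (z \in V) && (w z == 0)) L by apply/allP => z; rewrite mem_filter andbC.
elim: L => [_|y L IH /= /andP[/andP[yV /eqP wy0] /IH[kap kapR isoL]]]; first by exists kap0.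
exists (bypass V kap y); first exact: bypass_realization.
move=> z; rewrite inE => /predU1P[->|zL]; first exact: bypass_isolated_self.
exact: bypass_isolated (isoL z zL).
Qed.

Definition sources V kap : {fset vec} :=
  [fset a in V | has (fun b => 0 < kap (a, b)) V]%fset.

Section Sources.
Variables (V : {fset vec}) (w : vec -> vec) (kap : vec * vec -> R).
Hypothesis kapR : wr_realization V w kap.

Lemma sourcesP a : reflect (exists b, 0 < kap (a, b)) (a \in sources V kap).
Proof.
rewrite !inE; apply: (iffP andP) => [[_ /hasP[b _ ab]]|[b ab]]; first by exists b.
by have [aV bV] := rate_support kapR ab; split => //; apply/hasP; exists b.
Qed.

Lemma target_in_sources a b : 0 < kap (a, b) -> b \in sources V kap.
Proof.
move=> ab; apply/sourcesP; apply: reachable_out (rate_reversible kapR ab) _.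
by rewrite eq_sym (rate_pos_neq kapR ab).
Qed.

Lemma sources_exponents : {in V, forall z, w z = 0 -> isolated kap z} ->
  sources V kap = monomial_exponents V w.
Proof.
move=> iso; apply/fsetP => a; rewrite /monomial_exponents [in RHS]inE /=.
apply/sourcesP/andP => [[b ab]|[aV wa]]; last first.
  by apply: (@net_vector_neq0_out V) (rate_ge0 kapR) _; rewrite (rate_net_vector kapR aV).
have aV := (rate_support kapR ab).1; split => //; apply: contraTneq ab => wa.
by rewrite (iso a aV wa b).1 ltxx.
Qed.

Definition dotv (u v : vec) : R := \sum_i u 0 i * v 0 i.

Lemma dotv_net_vector u a :
  dotv u (net_vector V kap a) = \sum_(b <- V) kap (a, b) * dotv u (b - a).
Proof.
rewrite /dotv /net_vector; under eq_bigr do rewrite summxE mulr_sumr.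
rewrite exchange_big; apply: eq_bigr => b _; rewrite mulr_sumr.
by apply: eq_bigr => i _; rewrite mxE mulrCA.
Qed.

Lemma dotv_lt0 (a b : vec) : dotv b b <= dotv a a -> a != b -> dotv a (b - a) < 0.
Proof.
move=> ba; rewrite eq_sym -subr_eq0 => /exists_rV_neq[i]; rewrite [X in _ != X]mxE => ni.
have key : 2 * dotv a (b - a) = dotv b b - dotv a a - dotv (b - a) (b - a).
  by rewrite /dotv mulr_sumr -!sumrB; apply: eq_bigr => j _; rewrite !mxE; ring.
have : 0 < dotv (b - a) (b - a).
  rewrite /dotv (bigD1 i) //=; apply: ltr_pwDl; first by rewrite -expr2 exprn_even_gt0.
  by apply: sumr_ge0 => j _; rewrite -expr2 sqr_ge0.
by move: key; lra.
Qed.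

(* All reactions of a source of maximal norm point inwards, so they cannot balance. *)
Lemma exists_net_vector_neq0 a0 b0 : 0 < kap (a0, b0) -> exists2 a, a \in V & w a != 0.
Proof.
move=> ab0; have a0S : a0 \in sources V kap by apply/sourcesP; exists b0.
pose nrm (a : sources V kap) := dotv (val a) (val a).
have [[a aS] _ /= amax] := @arg_maxP _ _ _ [` a0S]%fset xpredT nrm isT.
have /sourcesP[m am] := aS; have aV := (rate_support kapR am).1.
exists a => //; rewrite -(rate_net_vector kapR aV); apply/eqP => w0.
suff : dotv a (net_vector V kap a) < 0.
  by rewrite w0 /dotv big1 ?ltxx // => i _; rewrite mxE mulr0.
have ab_le0 b : kap (a, b) * dotv a (b - a) <= 0.
  have [ab|ab] := ltP 0 (kap (a, b)); last first.
    by rewrite (@le_anti _ _ (kap (a, b)) 0) ?mul0r // ab (rate_ge0 kapR).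
  rewrite pmulr_rle0 // ltW // dotv_lt0 ?(rate_pos_neq kapR ab) //.
  exact: (amax [` target_in_sources ab]%fset isT).
rewrite dotv_net_vector (bigD1_seq m) ?fset_uniq ?(rate_support kapR am).2 //=.
rewrite ltr_wnDr ?pmulr_rlt0 ?dotv_lt0 ?(rate_pos_neq kapR am) ?sumr_le0 //.
exact: amax [` target_in_sources am]%fset isT.
Qed.

End Sources.
End Rates.

Section Networks.
Context {R : realType} {d : nat}.
Notation vec := 'rV[R]_d.
Implicit Types (G : network R d) (V : {fset vec}) (kap k : vec * vec -> R).

Definition edge_rates G k (e : vec * vec) : R := if e \in edges G then k e else 0.

Lemma generated_field_net_vector G k V x : (edges G `<=` V `*` V)%fset ->
  generated_field G k x = poly_field V (net_vector V (edge_rates G k)) x.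
Proof.
move=> EV; rewrite /generated_field.
rewrite (eq_big_seq (fun e => (edge_rates G k e * monom x (src e)) *: (tgt e - src e))).
  2: by move=> e eG; rewrite /edge_rates eG.
rewrite (big_fset_incl _ EV) => [|e _ /negPf eG]; last by rewrite /edge_rates eG mul0r scale0r.
rewrite big_fsetM; apply: eq_bigr => a _; rewrite /net_vector scaler_sumr.
by apply: eq_bigr => b _; rewrite scalerA mulrC.
Qed.

Lemma path_reachable G k u p : (forall e, e \in edges G -> 0 < k e) ->
  path (fun a b => (a, b) \in edges G) u p -> reachable (edge_rates G k) u (last u p).
Proof.
move=> kpos; elim: p u => [|m p IH] u /=; first by move=> _; apply: reachable_refl.
by case/andP => um /IH; apply: reachable_step; rewrite /edge_rates um kpos.
Qed.

Lemma edge_rates_realization G k : is_network G -> weakly_reversible G ->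
    (forall e, e \in edges G -> 0 < k e) ->
  wr_realization (nodes G) (net_vector (nodes G) (edge_rates G k)) (edge_rates G k).
Proof.
case=> _ _ Esub Eloop _ Gwr kpos; split => // [e|a|a b|a b].
- by rewrite /edge_rates; case: ifP => // /kpos /ltW.
- by rewrite /edge_rates; case: ifP => // /Eloop; rewrite /src /tgt eqxx.
- by rewrite /edge_rates; case: ifP => [/Esub //|]; rewrite ltxx.
rewrite /edge_rates; case: ifP => [ab _|]; last by rewrite ltxx.
by have [p [pp /= <-]] := Gwr _ ab; apply: path_reachable.
Qed.

Definition support_edges V kap : {fset vec * vec} :=
  [fset e in (V `*` V)%fset | 0 < kap e]%fset.

Definition support_network V kap : network R d :=
  Network (sources V kap) (support_edges V kap).

Section SupportNetwork.
Variables (V : {fset vec}) (w : vec -> vec) (kap : vec * vec -> R).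
Hypothesis kapR : wr_realization V w kap.

Lemma mem_support_edges e : (e \in support_edges V kap) = (0 < kap e).
Proof.
case: e => a b; rewrite !inE /=; case: ltP => ab; rewrite ?andbF ?andbT //.
by have [-> ->] := rate_support kapR ab.
Qed.

Lemma support_network_is_network a0 b0 : {in V, forall y, nonneg_vec y} ->
  0 < kap (a0, b0) -> is_network (support_network V kap).
Proof.
move=> V0 ab0; split => /=.
- by apply/fset0Pn; exists a0; apply/(sourcesP kapR); exists b0.
- by move=> y /(sourcesP kapR)[b /(rate_support kapR)[yV _]]; apply: V0.
- move=> [a b]; rewrite mem_support_edges /src /tgt /= => ab.
  by split; [apply/(sourcesP kapR); exists b | exact (target_in_sources kapR ab)].
- by move=> [a b]; rewrite mem_support_edges; apply: rate_pos_neq kapR.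
- move=> a /(sourcesP kapR)[b ab]; exists (a, b); rewrite ?mem_support_edges //.
  by rewrite /src eqxx.
Qed.

Lemma support_network_wr : weakly_reversible (support_network V kap).
Proof.
move=> [a b]; rewrite mem_support_edges /src /tgt /= => /(rate_reversible kapR).
elim=> [c|c m e cm _ [p [pp <-]]]; first by exists [::].
by exists (m :: p); rewrite /= mem_support_edges cm.
Qed.

Lemma support_network_generates f : (forall x, nonneg_vec x -> poly_field V w x = f x) ->
  generates (support_network V kap) kap f.
Proof.
move=> Vf; split => [e|x x0]; first by rewrite mem_support_edges.
rewrite (@generated_field_net_vector _ _ V) -?Vf //; last first.
  by apply/fsubsetP => e; rewrite !inE => /andP[].
apply: eq_big_seq => a aV; rewrite -(rate_net_vector kapR aV); congr (_ *: _).
apply: eq_bigr => b _; rewrite /edge_rates mem_support_edges.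
by case: ltP => // ab; rewrite (@le_anti _ _ (kap (a, b)) 0) // ab (rate_ge0 kapR).
Qed.

Lemma source_nodes_support_network : source_nodes (support_network V kap) = sources V kap.
Proof.
apply/fsetP => a; apply/imfsetP/(sourcesP kapR) => [[[a' b]] /= + ->|[b ab]].
  by rewrite mem_support_edges => ab; exists b.
by exists (a, b); rewrite /= ?mem_support_edges.
Qed.

End SupportNetwork.
End Networks.

Unset Implicit Arguments.
Theorem theorem4 (R : realType) (d : nat) (S : {fset 'rV[R]_d})
    (c : 'rV[R]_d -> 'rV[R]_d) :
  weakly_reversible_system (poly_field S c) ->
  exists (G : network R d) (k : 'rV[R]_d * 'rV[R]_d -> R),
    [/\ is_network G, weakly_reversible G, generates G k (poly_field S c) &
        source_nodes G = monomial_exponents S c].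
Proof.
case=> G [k [HG Gwr [kpos Gf]]].
set V := nodes G; set kap0 := edge_rates G k; set w := net_vector V kap0.
have kap0R : wr_realization V w kap0 := edge_rates_realization HG Gwr kpos.
have Vf x : nonneg_vec x -> poly_field V w x = poly_field S c x.
  move=> x0; rewrite -Gf // (generated_field_net_vector _ _ (V := V)) //.
  by case: HG => _ _ Esub _ _; apply/fsubsetP => e /Esub[]; rewrite in_fsetM => -> ->.
have [[a0 b0] e0G] : exists e0, e0 \in edges G.
  by case: HG => /fset0Pn[y yV] _ _ _ /(_ y yV)[e eG _]; exists e.
have e0pos : 0 < kap0 (a0, b0) by rewrite /kap0 /edge_rates e0G kpos.
have [a aV wa] := exists_net_vector_neq0 kap0R e0pos.
have [kap kapR iso] := exists_isolating_realization kap0R.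
have srcE := sources_exponents kapR iso.
have [b ab] : exists b, 0 < kap (a, b).
  by apply/(sourcesP kapR); rewrite srcE /monomial_exponents !inE aV wa.
exists (support_network V kap), kap; split.
- have V0 : {in V, forall y, nonneg_vec y} by case: HG.
  exact (support_network_is_network kapR V0 ab).
- exact: support_network_wr kapR.
- exact: support_network_generates kapR _ Vf.
- by rewrite (source_nodes_support_network kapR) srcE (poly_field_exponents Vf).
Qed.
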